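(* For every $r\ge3$ there is a bijection between the set of partitions of the highest root $\tilde\alpha_{C_r}=2\varepsilon_1$ of type $C_r$ into positive roots of $C_r$ and the set $\mathrm{JS}(\langle2\rangle,\langle2\rangle,r)$. In particular $K_{C_r}(\tilde\alpha_{C_r})=\mathsf{js}(\langle2\rangle,\langle2\rangle,r)$.
   Context: The positive roots of type $C_r$ are $\Phi^+_{C_r}=\{\varepsilon_i-\varepsilon_j,\ \varepsilon_i+\varepsilon_j:1\le i<j\le r\}\cup\{2\varepsilon_i:1\le i\le r\}\subset\mathbb{R}^r$; a partition of $\mu$ is a finite multiset of positive roots summing to $\mu$, and $K_{C_r}(\mu)$ is their number. A juggling state is a finitely supported integer vector $\langle s_1,s_2,\dots\rangle$ indexed by heights (trailing zeros omitted). A juggling sequence of length $n$ from $\mathbf{a}$ to $\mathbf{b}$ is a sequence $(\mathbf{s}_0,\dots,\mathbf{s}_n)$ with $\mathbf{s}_0=\mathbf{a}$, $\mathbf{s}_n=\mathbf{b}$ such that for each $i$ there are nonnegative integers $c^{(i)}_k$ (finitely many nonzero) with $\sum_k c^{(i)}_k=(\mathbf{s}_{i-1})_1$ and $(\mathbf{s}_i)_k=(\mathbf{s}_{i-1})_{k+1}+c^{(i)}_k$ for all $k\ge1$. $\mathrm{JS}(\mathbf{a},\mathbf{b},n)$ is the set of these and $\mathsf{js}$ its cardinality. *)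

From HB Require Import structures.
From mathcomp Require Import all_boot all_order all_algebra.
Set Implicit Arguments. Unset Strict Implicit. Unset Printing Implicit Defensive.
Import Order.TTheory GRing.Theory Num.Theory.

Local Open Scope ring_scope.

(* Vectors of R^r with integer coordinates: row vectors 'rV[int]_r.
   Coordinate j (0-based) corresponds to epsilon_{j+1}. *)
Definition eps (r k : nat) : 'rV[int]_r := \row_(j < r) ((nat_of_ord j == k)%:R).

(* Index type for the positive roots of C_r:
   inl (i, j, false) : eps_i - eps_j  (i < j)
   inl (i, j, true)  : eps_i + eps_j  (i < j)
   inr i             : 2 eps_i *)
Definition rootC_idx (r : nat) : finType := (('I_r * 'I_r * bool) + 'I_r)%type.

Definition rootC_valid r (t : rootC_idx r) : bool :=
  match t with
  | inl (i, j, _) => (i < j)%N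
  | inr _ => true
  end.

Definition rootC_vec r (t : rootC_idx r) : 'rV[int]_r :=
  match t with
  | inl (i, j, false) => eps r i - eps r j
  | inl (i, j, true) => eps r i + eps r j
  | inr i => eps r i *+ 2
  end.

(* A partition of mu: a finite multiset of positive roots (multiplicity function,
   supported on genuine positive roots) summing to mu. *)
Definition is_partitionC r (mu : 'rV[int]_r) (m : {ffun rootC_idx r -> nat}) : bool :=
  [forall t, ~~ rootC_valid t ==> (m t == 0%N)] &&
  (\sum_(t : rootC_idx r) rootC_vec t *+ m t == mu).

Definition PartC r (mu : 'rV[int]_r) := {m : {ffun rootC_idx r -> nat} | is_partitionC mu m}.

Definition highestC r : 'rV[int]_r := eps r 0 *+ 2.

(* Juggling states: finitely supported integer vectors <s_1, s_2, ...>,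
   represented as seq int with trailing zeros omitted; s_k = nth 0 s k.-1. *)
Definition state_canonical (s : seq int) : bool := last 1 s != 0.

(* One throw step from s to t (0-based indices: height k+1 <-> index k). *)
Definition js_step (s t : seq int) : Prop :=
  exists c : seq nat,
    ((sumn c)%:Z = nth 0 s 0) /\
    (forall k : nat, nth 0 t k = nth 0 s k.+1 + (nth 0%N c k)%:Z).

Definition is_js (a b : seq int) (n : nat) (ss : seq (seq int)) : Prop :=
  [/\ size ss = n.+1,
      nth [::] ss 0 = a,
      nth [::] ss n = b,
      all state_canonical ss &
      forall i : nat, (i < n)%N -> js_step (nth [::] ss i) (nth [::] ss i.+1)].

Definition JS (a b : seq int) (n : nat) := {ss : seq (seq int) | is_js a b n ss}.

From HB Require Import structures.
From mathcomp Require Import all_boot all_order all_algebra.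
From mathcomp Require Import zify ring.
From Stdlib Require Import ProofIrrelevance.
Set Implicit Arguments. Unset Strict Implicit. Unset Printing Implicit Defensive.
Import Order.TTheory GRing.Theory Num.Theory.
Local Open Scope ring_scope.

(* Both sets are in bijection with the flows of value 2 from 0 to r in the
   complete acyclic graph on {0, ..., r}: functions [arc a b] supported on
   a < b <= r, with outflow = inflow at every inner node, 2 units leaving 0
   and 2 units entering r.
   For juggling, [arc a b] counts the balls thrown at time a that land at
   time b; the state at time i lists the balls in the air, and two
   consecutive states determine the throws in between.  The final state <2>
   forces every ball to land at time r.
   For partitions, 2 eps_1 has coordinate sum 2; roots eps_a - eps_b
   contribute 0 and all other positive roots 2, so a partition consists of
   one root eps_a + eps_b or 2 eps_a and a multiset of roots eps_a - eps_b.
   The latter are the inner arcs a -> b, the former the arcs into r, and the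
   coordinate equations of the partition are exactly flow conservation. *)

Fixpoint trim (s : seq int) : seq int :=
  if s is x :: s' then
    if (trim s' == [::]) && (x == 0) then [::] else x :: trim s'
  else [::].

Lemma nth_trim s k : nth 0 (trim s) k = nth 0 s k.
Proof.
elim: s k => [|x s IHs] k /=; first by rewrite !nth_nil.
case: ifP => [/andP[/eqP s0 /eqP ->]|_]; last by case: k.
by case: k => [|k] //=; rewrite -IHs s0 nth_nil.
Qed.

Lemma trim_canonical s : state_canonical (trim s).
Proof.
rewrite /state_canonical; elim: s => [|x s IHs] //=.
case: ifP => [//|]; case: (trim s) IHs => [|y t] //= _.
by move=> ->.
Qed.

Lemma canonical_behead x s : state_canonical (x :: s) -> state_canonical s.
Proof. by case: s. Qed.

Lemma canonical_nth0 t : state_canonical t -> (forall k, nth 0 t k = 0) -> t = [::].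
Proof.
elim: t => [//|x t IHt] Ct t0.
have t_nil : t = [::] by apply: IHt => [|k]; [exact: canonical_behead Ct|exact: (t0 k.+1)].
by move: Ct (t0 0%N); rewrite t_nil /state_canonical /= => /negbTE/eqP.
Qed.

Lemma canonical_eq_from_nth s t : state_canonical s -> state_canonical t ->
  (forall k, nth 0 s k = nth 0 t k) -> s = t.
Proof.
elim: s t => [|x s IHs] [|y t] Cs Ct E.
- by [].
- by rewrite (canonical_nth0 Ct) // => k; rewrite -E nth_nil.
- by rewrite (canonical_nth0 Cs) // => k; rewrite E nth_nil.
congr cons; first exact: (E 0%N).
by apply: IHs => [||k]; [exact: canonical_behead Cs|exact: canonical_behead Ct|exact: (E k.+1)].
Qed.

Lemma big_only (R : Type) (idx : R) (op : Monoid.com_law idx) (I : finType)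
    (F : I -> R) j :
  (forall i, i != j -> F i = idx) -> \big[op/idx]_i F i = F j.
Proof. by move=> Fj; rewrite (bigD1 j) //= big1 ?Monoid.mulm1 // => i /Fj. Qed.
Arguments big_only {R idx op I F} j.

Lemma sum_ord_trunc (F : nat -> nat) n N :
  (forall k, (n <= k)%N -> F k = 0%N) -> (n <= N)%N ->
  (\sum_(k < N) F k = \sum_(k < n) F k)%N.
Proof.
move=> F0 le_nN; rewrite -(subnKC le_nN) big_split_ord /=.
by rewrite [X in (_ + X)%N]big1 ?addn0 // => k _; apply: F0; rewrite leq_addr.
Qed.

Lemma sumn_nth_vanish (c : seq nat) n :
  (forall k, (n <= k)%N -> nth 0%N c k = 0%N) -> sumn c = (\sum_(k < n) nth 0%N c k)%N.
Proof.
move=> c0; rewrite sumnE (big_nth 0%N) big_mkord.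
rewrite -(@sum_ord_trunc (nth 0%N c) (size c) (maxn (size c) n)) ?leq_maxl //;
  last by move=> k /(nth_default 0%N).
by rewrite (@sum_ord_trunc (nth 0%N c) n) ?leq_maxr.
Qed.

Lemma sum_nat_eq1 (I : finType) (F : I -> nat) : (\sum_i F i = 1)%N ->
  exists i0, F i0 = 1%N /\ forall i, i != i0 -> F i = 0%N.
Proof.
case: (pickP (fun i => F i != 0%N)) => [i0 Fi0|F0] sumF; last first.
  by move: sumF; rewrite big1 // => i _; apply/eqP/negbFE/F0.
move: sumF; rewrite (bigD1 i0) //= => sumF.
have Fi0_1 : F i0 = 1%N by move: Fi0 sumF; case: (F i0) => [|[|n]] //=; lia.
exists i0; split=> // i ne_ii0.
have /eqP : (\sum_(i | i != i0) F i = 0)%N by lia.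
by rewrite sum_nat_eq0 => /forallP/(_ i); rewrite ne_ii0 => /implyP/(_ isT)/eqP.
Qed.

Section Flows.
Variable r : nat.
Implicit Types arc : nat -> nat -> nat.

Definition arc_support arc :=
  forall a b, ~~ ((a < b) && (b <= r))%N -> arc a b = 0%N.

Definition flow_conservation arc := forall i, (i < r)%N ->
  (\sum_(j < r.+1) arc i j = 2 * (i == 0%N) + \sum_(t < i) arc t i)%N.

Definition sink_inflow2 arc := (\sum_(t < r) arc t r = 2)%N.

Definition is_flow arc :=
  [/\ arc_support arc, flow_conservation arc & sink_inflow2 arc].

(* Balls at height k + 1 at time i: the two initial balls, and the balls
   thrown before time i that land at time i + k. *)
Definition flow_height arc i k : int :=
  (2 * (i + k == 0%N) + \sum_(t < i) arc t (i + k))%N%:Z.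

Definition flow_state arc i : seq int := trim (mkseq (flow_height arc i) r.+2).

Definition flow_states arc : seq (seq int) := mkseq (flow_state arc) r.+1.

Lemma flow_out_shift arc i : arc_support arc -> (i <= r)%N ->
  (\sum_(j < r.+1) arc i j = \sum_(k < r - i) arc i (i + k.+1))%N.
Proof.
move=> supp le_ir; have -> : r.+1 = (i.+1 + (r - i))%N by lia.
rewrite big_split_ord /= big1 ?add0n => [|j _]; last first.
  by apply: supp; case: j => /= j; lia.
by apply: eq_bigr => k _; rewrite addSnnS.
Qed.

Lemma flow_height_succ arc i k :
  flow_height arc i.+1 k = flow_height arc i k.+1 + (arc i (i + k.+1)%N)%:Z.
Proof.
rewrite /flow_height big_ord_recr /= -PoszD addSnnS.
by have -> : (i + k.+1 == 0)%N = false by lia.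
Qed.

Lemma nth_flow_state arc i k : arc_support arc ->
  nth 0 (flow_state arc i) k = flow_height arc i k.
Proof.
move=> supp; rewrite /flow_state nth_trim.
case: (ltnP k r.+2) => lt_k; first by rewrite nth_mkseq.
rewrite nth_default ?size_mkseq // /flow_height.
have -> : (i + k == 0)%N = false by lia.
by rewrite big1 // => t _; apply: supp; lia.
Qed.

Lemma flow_state0 arc : arc_support arc -> flow_state arc 0 = [:: Posz 2].
Proof.
move=> supp; apply: canonical_eq_from_nth; rewrite ?trim_canonical // => k.
rewrite nth_flow_state // /flow_height big_ord0 addn0 add0n.
by case: k => [|k] //=; rewrite nth_nil.
Qed.

Lemma flow_state_last arc : (0 < r)%N -> arc_support arc -> sink_inflow2 arc ->
  flow_state arc r = [:: Posz 2].
Proof.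
move=> r_gt0 supp sink; apply: canonical_eq_from_nth; rewrite ?trim_canonical // => k.
rewrite nth_flow_state // /flow_height; case: k => [|k].
  by rewrite addn0 sink; have -> : (r == 0)%N = false by lia.
rewrite big1 => [|t _]; last by apply: supp; lia.
by rewrite addn0 /= nth_nil; have -> : (r + k.+1 == 0)%N = false by lia.
Qed.

Lemma flow_states_js arc : (0 < r)%N -> is_flow arc ->
  is_js [:: Posz 2] [:: Posz 2] r (flow_states arc).
Proof.
move=> r_gt0 [supp conserv sink]; split; rewrite /flow_states.
- by rewrite size_mkseq.
- by rewrite nth_mkseq // flow_state0.
- by rewrite nth_mkseq // flow_state_last.
- by apply/allP => s /mapP [i _ ->]; exact: trim_canonical.
move=> i lt_ir; rewrite !nth_mkseq ?ltnS ?(ltnW lt_ir) //.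
pose c := mkseq (fun k => arc i (i + k.+1)) r.+1.
have nth_c k : nth 0%N c k = arc i (i + k.+1).
  case: (ltnP k r.+1) => lt_k; first by rewrite nth_mkseq.
  by rewrite nth_default ?size_mkseq // supp //; lia.
clearbody c; exists c; split=> [|k]; last by rewrite nth_c !nth_flow_state // flow_height_succ.
rewrite nth_flow_state // /flow_height addn0 -conserv //.
congr Posz; rewrite flow_out_shift ?(ltnW lt_ir) //.
rewrite (@sumn_nth_vanish c (r - i)) => [|k le_k]; last by rewrite nth_c supp //; lia.
by apply: eq_bigr => k _; rewrite nth_c.
Qed.

Lemma eq_flow_states arc1 arc2 : arc1 =2 arc2 -> flow_states arc1 = flow_states arc2.
Proof.
move=> eq_arc; apply: eq_mkseq => i; congr trim; apply: eq_mkseq => k.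
by rewrite /flow_height; congr (Posz (_ + _)); apply: eq_bigr => t _; rewrite eq_arc.
Qed.

End Flows.

Section JugglingFlow.
Variables (r : nat) (ss : seq (seq int)).
Hypothesis ss_js : is_js [:: Posz 2] [:: Posz 2] r ss.
Hypothesis r_gt0 : (0 < r)%N.

Local Notation state i := (nth [::] ss i).

Definition js_throws i k : nat := absz (nth 0 (state i.+1) k - nth 0 (state i) k.+1)%R.

Definition js_arc a b : nat := if (a < b)%N then js_throws a (b - a.+1) else 0%N.

Lemma js_arc_shift i k : js_arc i (i + k.+1) = js_throws i k.
Proof. by rewrite /js_arc ifT; [congr js_throws|]; lia. Qed.

Lemma js_stateS i k : (i < r)%N ->
  nth 0 (state i.+1) k = nth 0 (state i) k.+1 + (js_throws i k)%:Z.
Proof.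
case: ss_js => _ _ _ _ step /step [c [_ state_c]].
by rewrite /js_throws state_c addrAC subrr add0r.
Qed.

Lemma js_throws_sum i n : (i < r)%N -> (forall k, (n <= k)%N -> js_throws i k = 0%N) ->
  (\sum_(k < n) js_throws i k)%N%:Z = nth 0 (state i) 0.
Proof.
case: ss_js => _ _ _ _ step /step [c [<- state_c]] throws0.
have c_throws k : nth 0%N c k = js_throws i k.
  by rewrite /js_throws state_c addrAC subrr add0r.
rewrite (@sumn_nth_vanish c n) => [|k le_nk]; last by rewrite c_throws throws0.
by congr Posz; apply: eq_bigr => k _; rewrite c_throws.
Qed.

Lemma js_state_height i k : (i <= r)%N -> nth 0 (state i) k = flow_height js_arc i k.
Proof.
elim: i k => [|i IHi] k le_ir.
  case: ss_js => _ -> _ _ _; rewrite /flow_height big_ord0 addn0 add0n.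
  by case: k => [|k] //=; rewrite nth_nil.
by rewrite js_stateS // flow_height_succ IHi ?(ltnW le_ir) // js_arc_shift.
Qed.

Lemma js_arc_support : arc_support r js_arc.
Proof.
move=> a b; rewrite /js_arc; case: ifP => //= lt_ab /negbTE out_ab.
have [size_ss _ last_ss _ _] := ss_js.
have [lt_ar|le_ra] := ltnP a r.
  have lt_rb : (r < b)%N by lia.
  have := js_state_height (b - r) (leqnn r).
  rewrite last_ss nth_default /flow_height; last by rewrite /=; lia.
  move=> /eqP; rewrite eqz_nat subnKC ?(ltnW lt_rb) // => /eqP height0.
  have : (\sum_(t < r) js_arc t b == 0)%N by lia.
  by rewrite sum_nat_eq0 => /forallP/(_ (Ordinal lt_ar))/eqP; rewrite /js_arc lt_ab.
rewrite /js_throws (nth_default [::] (_ : size ss <= a.+1)%N) ?size_ss // nth_nil.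
have [lt_ra|eq_ar] := ltnP r a.
  by rewrite (nth_default [::] (_ : size ss <= a)%N) ?size_ss // nth_nil.
have -> : a = r by lia.
by rewrite last_ss /= nth_nil.
Qed.

Lemma js_arc_conservation : flow_conservation r js_arc.
Proof.
move=> i lt_ir; rewrite flow_out_shift ?(ltnW lt_ir) //; last exact: js_arc_support.
have throws0 k : (r - i <= k)%N -> js_throws i k = 0%N.
  by move=> le_k; rewrite -js_arc_shift js_arc_support //; lia.
have := js_throws_sum lt_ir throws0.
rewrite js_state_height ?(ltnW lt_ir) // /flow_height addn0 => /eqP.
rewrite eqz_nat => /eqP <-.
by apply: eq_bigr => k _; rewrite js_arc_shift.
Qed.

Lemma js_arc_sink : sink_inflow2 r js_arc.
Proof.
have [_ _ last_ss _ _] := ss_js.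
move: (js_state_height 0 (leqnn r)); rewrite last_ss /flow_height addn0 /=.
move=> /eqP; rewrite eqz_nat => /eqP.
by rewrite gtn_eqF // /sink_inflow2; lia.
Qed.

Lemma js_arc_flow : is_flow r js_arc.
Proof. by split; [exact: js_arc_support|exact: js_arc_conservation|exact: js_arc_sink]. Qed.

Lemma flow_states_js_arc : flow_states r js_arc = ss.
Proof.
have [size_ss _ _ canon_ss _] := ss_js.
apply: (@eq_from_nth _ [::]) => [|i]; rewrite size_mkseq ?size_ss // => lt_ir.
rewrite nth_mkseq //; apply: canonical_eq_from_nth => [||k]; first exact: trim_canonical.
  by apply: (allP canon_ss); rewrite mem_nth ?size_ss.
by rewrite nth_flow_state ?js_state_height //; exact: js_arc_support.
Qed.

End JugglingFlow.

Lemma js_arc_flow_states r arc : (0 < r)%N -> is_flow r arc ->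
  js_arc (flow_states r arc) =2 arc.
Proof.
move=> r_gt0 flow_arc a b; have [supp _ _] := flow_arc.
have [/andP[lt_ab le_br]|out_ab] := boolP ((a < b) && (b <= r))%N; last first.
  by rewrite supp // (js_arc_support (flow_states_js r_gt0 flow_arc)).
rewrite /js_arc lt_ab /js_throws /flow_states !nth_mkseq; [|lia|lia].
rewrite !nth_flow_state // flow_height_succ.
have -> : (a + (b - a.+1).+1 = b)%N by lia.
by rewrite addrAC subrr add0r.
Qed.

Lemma sum_pair_bool (V : nmodType) (I J : finType) (G : I * J * bool -> V) :
  \sum_p G p = \sum_a \sum_b (G (a, b, false) + G (a, b, true)).
Proof.
rewrite (eq_bigr (fun p => G (p.1, p.2))) => [|[]//].
rewrite -(pair_bigA _ (fun ab s => G (ab, s))).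
rewrite (eq_bigr (fun ab => G (ab.1, ab.2, false) + G (ab.1, ab.2, true))) => [|[a b] _];
  last by rewrite big_bool addrC.
by rewrite -(pair_bigA _ (fun a b => G (a, b, false) + G (a, b, true))).
Qed.

Lemma sum_delta_row (I : finType) (F : I -> I -> nat) j :
  \sum_a \sum_b ((j == a)%:R *+ F a b) = (\sum_b F j b)%:Z :> int.
Proof.
rewrite (big_only j) => [|a ne_aj]; last first.
  by apply: big1 => b _; rewrite eq_sym (negbTE ne_aj) mul0rn.
by rewrite eqxx -natz natr_sum; apply: eq_bigr => b _; rewrite -mulrnA mul1n.
Qed.

Lemma sum_delta_col (I : finType) (F : I -> I -> nat) j :
  \sum_a \sum_b ((j == b)%:R *+ F a b) = (\sum_a F a j)%:Z :> int.
Proof. by rewrite exchange_big (sum_delta_row (fun b a => F a b)). Qed.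

Section Partitions.
Variable r : nat.
Implicit Types m : {ffun rootC_idx r -> nat}.

Definition minus_out m j : nat := \sum_b m (inl (j, b, false)).
Definition minus_in m j : nat := \sum_a m (inl (a, j, false)).
Definition plus_deg m j : nat :=
  2 * m (inr j) + \sum_b (m (inl (j, b, true)) + m (inl (b, j, true))).

Lemma coord_root_sum m j : (\sum_t rootC_vec t *+ m t) 0 j =
  (minus_out m j)%:Z - (minus_in m j)%:Z + (plus_deg m j)%:Z.
Proof.
rewrite summxE big_sumType /= sum_pair_bool.
rewrite (eq_bigr (fun a => \sum_b ((j == a)%:R *+ m (inl (a, b, false)))
    - \sum_b ((j == b)%:R *+ m (inl (a, b, false)))
    + (\sum_b ((j == a)%:R *+ m (inl (a, b, true)))
       + \sum_b ((j == b)%:R *+ m (inl (a, b, true)))))) => [|a _]; last first.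
  rewrite -sumrB -!big_split; apply: eq_bigr => b _ /=.
  by rewrite !mulmxnE !mxE mulrnBl mulrnDl.
rewrite [X in _ + X](eq_bigr (fun i => (j == i)%:R *+ (2 * m (inr i)))) => [|i _];
  last by rewrite !mulmxnE !mxE mulrnA.
rewrite !big_split /= sumrN !sum_delta_row !sum_delta_col.
rewrite [X in _ + X = _](big_only j) => [|i ne_ij]; last by rewrite eq_sym (negbTE ne_ij) mul0rn.
rewrite eqxx -mulrnA mul1n natz /plus_deg /minus_out /minus_in PoszD big_split /= PoszD.
rewrite -!natz !natr_sum; ring.
Qed.

Lemma highestC_coord (j : 'I_r) : highestC r 0 j = (2 * (j == 0 :> nat))%N%:Z.
Proof. by rewrite /highestC mulmxnE mxE -mulrnA natz mulnC. Qed.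

Lemma partition_invalid0 m t :
  is_partitionC (highestC r) m -> ~~ rootC_valid t -> m t = 0%N.
Proof. by case/andP => /forallP /(_ t) /implyP valid_m _ /valid_m /eqP. Qed.

Lemma partition_balance m j : is_partitionC (highestC r) m ->
  (minus_out m j + plus_deg m j = 2 * (j == 0 :> nat) + minus_in m j)%N.
Proof.
case/andP => _ /eqP sum_m; have := coord_root_sum m j.
by rewrite sum_m highestC_coord; lia.
Qed.

Lemma partition_plus_deg_sum m : (0 < r)%N -> is_partitionC (highestC r) m ->
  (\sum_j plus_deg m j = 2)%N.
Proof.
move=> r_gt0 part_m.
have out_in : (\sum_j minus_out m j = \sum_j minus_in m j)%N.
  by rewrite /minus_out /minus_in exchange_big.
have source2 : (\sum_(j : 'I_r) 2 * (j == 0 :> nat) = 2)%N.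
  rewrite (big_only (Ordinal r_gt0)) //= => j; rewrite -(inj_eq val_inj) /=.
  by move/negbTE ->.
have balance : (\sum_(j : 'I_r) (minus_out m j + plus_deg m j)
    = \sum_(j : 'I_r) (2 * (j == 0 :> nat) + minus_in m j))%N.
  by apply: eq_bigr => j _; exact: partition_balance.
rewrite big_split [X in _ = X]big_split /= out_in source2 in balance.
by apply/eqP; rewrite -(eqn_add2l (\sum_j minus_in m j)) balance addnC.
Qed.

Lemma partition_plus_count m : (0 < r)%N -> is_partitionC (highestC r) m ->
  (\sum_i m (inr i) + \sum_a \sum_b m (inl (a, b, true)) = 1)%N.
Proof.
move=> r_gt0 part_m; have := partition_plus_deg_sum r_gt0 part_m.
rewrite /plus_deg big_split /= -big_distrr /=.
have -> : (\sum_i \sum_b (m (inl (i, b, true)) + m (inl (b, i, true))) =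
           2 * \sum_a \sum_b m (inl (a, b, true)))%N.
  under eq_bigr => a _ do rewrite big_split.
  by rewrite big_split /= [X in (_ + X)%N]exchange_big /= addnn -mul2n.
by rewrite -mulnDr -{2}[2%N]muln1 => /eqP; rewrite eqn_pmul2l // => /eqP.
Qed.

Definition minus_mult m a b : nat :=
  match (insub a : option 'I_r), (insub b : option 'I_r) with
  | Some i, Some j => m (inl (i, j, false))
  | _, _ => 0%N
  end.

Definition plus_deg_nat m a : nat :=
  if (insub a : option 'I_r) is Some i then plus_deg m i else 0%N.

(* The arcs into the sink carry the coordinates of the unique root of the
   partition that is not of the form eps_a - eps_b. *)
Definition part_arc m a b : nat :=
  if (a < b)%N && (b < r)%N then minus_mult m a b
  else if (b == r) && (a < r)%N then plus_deg_nat m a else 0%N.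

Lemma minus_mult_ord m (i j : 'I_r) : minus_mult m i j = m (inl (i, j, false)).
Proof. by rewrite /minus_mult !valK. Qed.

Lemma plus_deg_nat_ord m (i : 'I_r) : plus_deg_nat m i = plus_deg m i.
Proof. by rewrite /plus_deg_nat valK. Qed.

Lemma part_arc_sink m (i : 'I_r) : part_arc m i r = plus_deg m i.
Proof. by rewrite /part_arc ltnn andbF eqxx ltn_ord plus_deg_nat_ord. Qed.

Lemma part_arc_minus m (i j : 'I_r) : is_partitionC (highestC r) m ->
  part_arc m i j = m (inl (i, j, false)).
Proof.
move=> part_m; rewrite /part_arc ltn_ord andbT (ltn_eqF (ltn_ord j)).
case: ifP => lt_ij; first by rewrite minus_mult_ord.
by rewrite partition_invalid0 //= lt_ij.
Qed.

Lemma part_arc_support m : arc_support r (part_arc m).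
Proof.
move=> a b; rewrite /part_arc; case: ifP => [/andP[-> /ltnW ->] //|_].
by case: ifP => // /andP[/eqP -> ->]; rewrite leqnn.
Qed.

Lemma part_arc_flow m : (0 < r)%N -> is_partitionC (highestC r) m -> is_flow r (part_arc m).
Proof.
move=> r_gt0 part_m; split; first exact: part_arc_support.
  move=> i lt_ir; rewrite big_ord_recr /=.
  have -> : (\sum_(t < i) part_arc m t i = minus_in m (Ordinal lt_ir))%N.
    rewrite -(@sum_ord_trunc (fun t => part_arc m t i) i r) => [|k le_ik|]; last exact: ltnW.
    - by apply: eq_bigr => t _; rewrite -[i]/(val (Ordinal lt_ir)) part_arc_minus.
    - by apply: part_arc_support; lia.
  rewrite -[i]/(val (Ordinal lt_ir)) part_arc_sink -partition_balance //.
  by congr (_ + _)%N; apply: eq_bigr => j _; rewrite part_arc_minus.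
rewrite /sink_inflow2 -(partition_plus_deg_sum r_gt0 part_m).
by apply: eq_bigr => j _; rewrite part_arc_sink.
Qed.

(* A flow sends its 2 units into r either both from one node a (the root
   2 eps_a) or one each from two nodes a < b (the root eps_a + eps_b). *)
Definition arc_partition (arc : nat -> nat -> nat) : {ffun rootC_idx r -> nat} :=
  [ffun t : rootC_idx r => match t with
   | inl (a, b, false) => if (a < b)%N then arc a b else 0%N
   | inl (a, b, true) => if (a < b)%N then (arc a r * arc b r)%N else 0%N
   | inr i => nat_of_bool (arc i r == 2%N)
   end].

Lemma eq_arc_partition arc1 arc2 : arc1 =2 arc2 -> arc_partition arc1 = arc_partition arc2.
Proof. by move=> eq_arc; apply/ffunP => -[[[a b] []]|i]; rewrite !ffunE /= !eq_arc. Qed.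

Lemma plus_deg_arc_partition arc : sink_inflow2 r arc ->
  forall j : 'I_r, plus_deg (arc_partition arc) j = arc j r.
Proof.
move=> sink j; rewrite /plus_deg !ffunE.
have le_2 : (arc j r <= 2)%N by rewrite -sink (bigD1 j) //= leq_addr.
have -> : (\sum_b (arc_partition arc (inl (j, b, true))
                  + arc_partition arc (inl (b, j, true))) = arc j r * (2 - arc j r))%N.
  rewrite (bigD1 j) //= !ffunE ltnn add0n.
  rewrite (eq_bigr (fun b : 'I_r => arc j r * arc b r)%N) => [|b ne_bj]; last first.
    rewrite !ffunE; case: (ltngtP j b) => [_|_|/val_inj eq_jb].
    - by rewrite addn0.
    - by rewrite add0n mulnC.
    - by rewrite eq_jb eqxx in ne_bj.
  by rewrite -big_distrr /=; move: sink; rewrite /sink_inflow2 (bigD1 j) //= => <-; rewrite addKn.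
by move: le_2; case: (arc j r) => [|[|[|n]]].
Qed.

Lemma arc_partition_is_partition arc : is_flow r arc ->
  is_partitionC (highestC r) (arc_partition arc).
Proof.
move=> [supp conserv sink]; apply/andP; split.
  by apply/forallP => -[[[a b] []]|i] //=; rewrite ffunE /=; case: ifP.
apply/eqP/rowP => j; rewrite coord_root_sum highestC_coord plus_deg_arc_partition //.
have := conserv j (ltn_ord j); rewrite big_ord_recr /=.
have -> : (minus_out (arc_partition arc) j = \sum_(b < r) arc j b)%N.
  apply: eq_bigr => b _; rewrite ffunE; case: ifP => // le_bj.
  by rewrite supp // le_bj.
have -> : (minus_in (arc_partition arc) j = \sum_(t < j) arc t j)%N.
  rewrite -(@sum_ord_trunc (fun t => arc t j) j r) => [|k le_jk|]; last exact: ltnW.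
  - apply: eq_bigr => b _; rewrite ffunE; case: ifP => // le_jb.
    by rewrite supp // le_jb.
  - by apply: supp; lia.
by move=> balance; rewrite addrAC -PoszD balance PoszD addrK.
Qed.

Lemma part_arc_arc_partition arc : arc_support r arc -> sink_inflow2 r arc ->
  part_arc (arc_partition arc) =2 arc.
Proof.
move=> supp sink a b; rewrite /part_arc.
case: ifP => [/andP[lt_ab lt_br]|not_minus].
  have lt_ar : (a < r)%N by lia.
  rewrite -[a]/(val (Ordinal lt_ar)) -[b]/(val (Ordinal lt_br)) minus_mult_ord ffunE /=.
  by rewrite lt_ab.
case: ifP => [/andP[/eqP -> lt_ar]|not_plus].
  by rewrite -[a]/(val (Ordinal lt_ar)) plus_deg_nat_ord plus_deg_arc_partition.
rewrite supp //; apply/negP => /andP[lt_ab le_br].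
by move: not_minus not_plus; rewrite lt_ab /=; case: ltngtP le_br => //; lia.
Qed.

Lemma plus_deg_double m i0 : m (inr i0) = 1%N ->
  (forall i, i != i0 -> m (inr i) = 0%N) -> (forall a b, m (inl (a, b, true)) = 0%N) ->
  forall j, plus_deg m j = (2 * (j == i0))%N.
Proof.
move=> m_i0 m_i m_ab j; rewrite /plus_deg big1 ?addn0 => [|b _]; last by rewrite !m_ab.
by have [->|/m_i ->] := eqVneq j i0; rewrite ?m_i0.
Qed.

Lemma plus_deg_pair m a0 b0 :
  (forall a b, m (inl (a, b, true)) = ((a == a0) && (b == b0)) :> nat) ->
  (forall i, m (inr i) = 0%N) -> forall j, plus_deg m j = ((j == a0) + (j == b0))%N.
Proof.
move=> m_ab m_i j; rewrite /plus_deg m_i muln0 add0n big_split /=.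
rewrite (big_only b0) => [|b /negbTE ne_b]; last by rewrite m_ab ne_b andbF.
rewrite (big_only a0) => [|a /negbTE ne_a]; last by rewrite m_ab ne_a.
by rewrite !m_ab !eqxx andbT.
Qed.

Lemma partition_plus_roots m : (0 < r)%N -> is_partitionC (highestC r) m ->
  (forall a b : 'I_r, (a < b)%N -> (plus_deg m a * plus_deg m b)%N = m (inl (a, b, true)))
  /\ (forall i, nat_of_bool (plus_deg m i == 2%N) = m (inr i)).
Proof.
move=> r_gt0 part_m; have count := partition_plus_count r_gt0 part_m.
have [double|] := ltnP 0 (\sum_i m (inr i)).
  have /sum_nat_eq1 [i0 [m_i0 m_i]] : (\sum_i m (inr i) = 1)%N by lia.
  have m_ab a b : m (inl (a, b, true)) = 0%N.
    have /eqP : (\sum_a \sum_b m (inl (a, b, true)) = 0)%N by lia.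
    rewrite sum_nat_eq0 => /forallP/(_ a); rewrite sum_nat_eq0 => /forallP/(_ b)/eqP.
    by [].
  have deg := plus_deg_double m_i0 m_i m_ab.
  split=> [a b lt_ab|i].
    by rewrite !deg m_ab -!val_eqE /=; move: lt_ab; case: eqP; case: eqP => //=; lia.
  by rewrite deg; have [->|/m_i ->] := eqVneq i i0; rewrite ?m_i0 ?eqxx //; case: (_ == _).
rewrite leqn0 => /eqP no_double.
have /sum_nat_eq1 [[a0 b0] [m_ab0 m_ab]] :
  (\sum_(p : 'I_r * 'I_r) m (inl (p.1, p.2, true)) = 1)%N 
  by rewrite -(pair_bigA _ (fun a b => m (inl (a, b, true)))) -count no_double.
have m_i i : m (inr i) = 0%N.
  by move/eqP: no_double; rewrite sum_nat_eq0 => /forallP/(_ i)/eqP.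
have lt_ab0 : (a0 < b0)%N.
  by rewrite ltnNge; apply/negP => le_ba; rewrite partition_invalid0 //= -leqNgt in m_ab0.
have m_abE a b : m (inl (a, b, true)) = ((a == a0) && (b == b0)) :> nat.
  have [/andP[/eqP -> /eqP ->]|ne] := boolP ((a == a0) && (b == b0)); first exact: m_ab0.
  by apply: (m_ab (a, b)); rewrite xpair_eqE.
have deg := plus_deg_pair m_abE m_i.
split=> [a b lt_ab|i]; rewrite ?deg ?m_abE ?m_i -!val_eqE /=; last first.
  by move: lt_ab0; case: eqP; case: eqP => //=; lia.
by move: lt_ab lt_ab0; case: eqP; case: eqP; case: eqP; case: eqP => //=; lia.
Qed.

Lemma arc_partition_part_arc m : (0 < r)%N -> is_partitionC (highestC r) m ->
  arc_partition (part_arc m) = m.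
Proof.
move=> r_gt0 part_m; have [plus_ab plus_i] := partition_plus_roots r_gt0 part_m.
apply/ffunP => -[[[a b] []]|i]; rewrite ffunE /=.
- case: ifP => lt_ab; first by rewrite !part_arc_sink plus_ab.
  by rewrite partition_invalid0 //= lt_ab.
- case: ifP => lt_ab; first by rewrite part_arc_minus.
  by rewrite partition_invalid0 //= lt_ab.
- by rewrite part_arc_sink plus_i.
Qed.

End Partitions.

Theorem mainTheorem12 (r : nat) (hr : (3 <= r)%N) :
  exists f : PartC (highestC r) -> JS [:: Posz 2] [:: Posz 2] r, bijective f.
Proof.
have r_gt0 : (0 < r)%N by lia.
pose to_js (m : PartC (highestC r)) : JS [:: Posz 2] [:: Posz 2] r :=
  exist _ (flow_states r (part_arc (proj1_sig m)))
    (flow_states_js r_gt0 (part_arc_flow r_gt0 (proj2_sig m))).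
pose to_part (ss : JS [:: Posz 2] [:: Posz 2] r) : PartC (highestC r) :=
  exist _ (arc_partition r (js_arc (proj1_sig ss)))
    (arc_partition_is_partition (js_arc_flow (proj2_sig ss) r_gt0)).
exists to_js, to_part.
- move=> [m part_m]; apply: val_inj => /=.
  rewrite (eq_arc_partition r (js_arc_flow_states r_gt0 (part_arc_flow r_gt0 part_m))).
  exact: arc_partition_part_arc.
- move=> [ss js_ss]; apply: subset_eq_compat => /=.
  have [supp _ sink] := js_arc_flow js_ss r_gt0.
  by rewrite (eq_flow_states r (part_arc_arc_partition supp sink)) flow_states_js_arc.
Qed.
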